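(* Assume the approximate realizability assumption holds with $\epsilon_1=0$, i.e. for every $\pi\in\Pi$, $$\min_{f\in\mathcal F}\max_{\pi'\in\Pi}\Vert f-\mathcal T_r^\pi f\Vert_{2,d^{\pi'}}^2\le 0\quad\text{and}\quad \min_{g\in\mathcal G}\max_{\pi'\in\Pi}\Vert g-\mathcal T_c^\pi g\Vert_{2,d^{\pi'}}^2\le 0,$$ and assume the behavior policy satisfies $\mu\in\Pi$. Fix any $\beta\ge 0$ and $\lambda>0$. For each $\pi\in\Pi$ let $$f_r^\pi\in\arg\min_{f\in\mathcal F}\big[\mathcal L_\mu(\pi,f)+\beta\,\mathcal E_\mu(\pi,f)\big],\qquad f_c^\pi\in\arg\min_{g\in\mathcal G}\big[-\lambda\,\mathcal L_\mu(\pi,g)+\beta\,\hat{\mathcal E}_\mu(\pi,g)\big],$$ and let $$\hat\pi^*\in\arg\max_{\pi\in\Pi}\Big[\mathcal L_\mu(\pi,f_r^\pi)-\lambda\{\mathcal L_\mu(\pi,f_c^\pi)\}_+\Big]$$ (these optimizers being assumed to exist). Then $J_r(\hat\pi^* )\ge J_r(\mu)$ and $\{J_c(\hat\pi^* )\}_+\le\{J_c(\mu)\}_++\frac{1}{\lambda}$.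
   Context: Constrained MDP $(\mathcal S,\mathcal A,\mathcal P,R,C,\gamma,\rho)$: state space $\mathcal S$ (possibly infinite), finite action set $\mathcal A$, transition kernel $\mathcal P:\mathcal S\times\mathcal A\to\Delta(\mathcal S)$, reward $R:\mathcal S\times\mathcal A\to[0,1]$, cost $C:\mathcal S\times\mathcal A\to[-1,1]$, discount $\gamma\in[0,1)$, initial state distribution $\rho$. Let $V_{\max}=1/(1-\gamma)$. For a stationary policy $\pi:\mathcal S\to\Delta(\mathcal A)$, $Q_r^\pi(s,a)=\mathbb E[\sum_{t\ge0}\gamma^t R(s_t,a_t)\mid s_0=s,a_0=a,\ a_t\sim\pi(\cdot|s_t),\ s_{t+1}\sim\mathcal P(\cdot|s_t,a_t)]$, $Q_c^\pi$ likewise with $C$; $V_\diamond^\pi(s)=\sum_a\pi(a|s)Q_\diamond^\pi(s,a)$; $J_r(\pi)=(1-\gamma)\mathbb E_{s\sim\rho}[V_r^\pi(s)]$, $J_c(\pi)=(1-\gamma)\mathbb E_{s\sim\rho}[V_c^\pi(s)]$. The discounted occupancy is $d^\pi(s,a)=(1-\gamma)\mathbb E[\sum_{t\ge0}\gamma^t\mathbb 1(s_t=s,a_t=a)]$ with $s_0\sim\rho$, $a_t\sim\pi(\cdot|s_t)$. For $f:\mathcal S\times\mathcal A\to\mathbb R$ and a policy $\pi$, $f(s,\pi):=\sum_a\pi(a|s)f(s,a)$. Bellman operators: $(\mathcal T_r^\pi f)(s,a)=R(s,a)+\gamma\mathbb E_{s'\sim\mathcal P(\cdot|s,a)}[f(s',\pi)]$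 and $(\mathcal T_c^\pi f)(s,a)=C(s,a)+\gamma\mathbb E_{s'\sim\mathcal P(\cdot|s,a)}[f(s',\pi)]$. $\Vert g\Vert_{2,\nu}=\sqrt{\mathbb E_{\nu}[g^2]}$, and $\{x\}_+=\max\{x,0\}$. Function classes: a policy class $\Pi$; $\mathcal F\subseteq\{f:\mathcal S\times\mathcal A\to[0,V_{\max}]\}$; $\mathcal G\subseteq\{g:\mathcal S\times\mathcal A\to[-V_{\max},V_{\max}]\}$; $\mathcal W\subseteq\{w:\mathcal S\times\mathcal A\to[0,B_w]\}$ containing the constant function $1$. The data distribution $\mu\in\Delta(\mathcal S\times\mathcal A)$ is the discounted state-action occupancy of a behavior policy, also denoted $\mu$. Define $\mathcal L_\mu(\pi,f)=\mathbb E_{(s,a)\sim\mu}[f(s,\pi)-f(s,a)]$, $\mathcal E_\mu(\pi,f)=\max_{w\in\mathcal W}|\mathbb E_\mu[w(s,a)(f-\mathcal T_r^\pi f)(s,a)]|$, and $\hat{\mathcal E}_\mu(\pi,f)=\max_{w\in\mathcal W}|\mathbb E_\mu[w(s,a)(f-\mathcal T_c^\pi f)(s,a)]|$. *)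

From HB Require Import structures.
From mathcomp Require Import all_boot all_order all_algebra.
From mathcomp Require Import all_classical all_reals all_analysis.
Set Implicit Arguments. Unset Strict Implicit. Unset Printing Implicit Defensive.
Import Order.TTheory GRing.Theory Num.Theory.
Local Open Scope classical_set_scope.
Local Open Scope ring_scope.

(* The transition kernel P : S x A -> Delta(S) is given as one probability
   kernel per action: P a s is the distribution of s' given (s,a). *)
Section CMDP.
Context {d : measure_display} {S : measurableType d} {R : realType} {A : finType}.

Definition policy_valid (pi : S -> A -> R) : Prop :=
  (forall s a, 0 <= pi s a) /\ (forall s, \sum_(a : A) pi s a = 1) /\
  (forall a, measurable_fun setT (fun s => pi s a)).

Definition polavg (pi : S -> A -> R) (f : S -> A -> R) (s : S) : R :=
  \sum_(a : A) pi s a * f s a.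

Definition nextE (P : A -> R.-pker S ~> S) (pi : S -> A -> R)
  (f : S -> A -> R) : S -> A -> R :=
  fun s a => Rintegral (P a s) setT (polavg pi f).

Definition bellman (P : A -> R.-pker S ~> S) (gamma : R) (Rw : S -> A -> R)
  (pi : S -> A -> R) (f : S -> A -> R) : S -> A -> R :=
  fun s a => Rw s a + gamma * nextE P pi f s a.

(* Q^pi_Rw(s,a) = E[ sum_t gamma^t Rw(s_t,a_t) | s_0=s, a_0=a ]
   = sum_t gamma^t E[Rw(s_t,a_t) | s_0 = s, a_0 = a], where the conditional
   law of (s_t,a_t) is obtained by iterating the transition/policy kernel. *)
Definition Qfun (P : A -> R.-pker S ~> S) (gamma : R) (pi : S -> A -> R)
  (Rw : S -> A -> R) : S -> A -> R :=
  fun s a => limn (fun n => \sum_(0 <= t < n) gamma ^+ t * iter t (nextE P pi) Rw s a).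

Definition Vfun P gamma pi Rw : S -> R := polavg pi (Qfun P gamma pi Rw).

Definition Jval (P : A -> R.-pker S ~> S) (rho : probability S R) (gamma : R)
  (Rw : S -> A -> R) (pi : S -> A -> R) : R :=
  (1 - gamma) * Rintegral rho setT (Vfun P gamma pi Rw).

(* E_{(s,a) ~ d^pi}[g]  where d^pi is the discounted occupancy:
   (1-gamma) E[ sum_t gamma^t g(s_t,a_t) ], s_0 ~ rho, a_t ~ pi(.|s_t). *)
Definition occE (P : A -> R.-pker S ~> S) (rho : probability S R) (gamma : R)
  (pi : S -> A -> R) (g : S -> A -> R) : R :=
  (1 - gamma) * Rintegral rho setT (Vfun P gamma pi g).

Definition norm2occ P rho gamma (pi : S -> A -> R) (g : S -> A -> R) : R :=
  Num.sqrt (occE P rho gamma pi (fun s a => g s a ^+ 2)).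

Definition Lmu P rho gamma (mub pi f : S -> A -> R) : R :=
  occE P rho gamma mub (fun s a => polavg pi f s - f s a).

(* E_mu(pi, f) = max_{w in W} | E_mu[ w (f - T^pi f) ] | (for Rw = R);
   hat E_mu uses Rw = C.  The max is taken as a supremum. *)
Definition Emu P rho gamma (Rw : S -> A -> R) (W : set (S -> A -> R))
  (mub pi f : S -> A -> R) : R :=
  sup [set `| occE P rho gamma mub
              (fun s a => w s a * (f s a - bellman P gamma Rw pi f s a)) |
        | w in W].

End CMDP.

From Pilot Require Import Defs.
From HB Require Import structures.
From mathcomp Require Import all_boot all_order all_algebra.
From mathcomp Require Import all_classical all_reals all_analysis.
From mathcomp Require Import measurable_realfun ring lra.
Set Implicit Arguments.
Unset Strict Implicit.
Unset Printing Implicit Defensive.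
Import Order.TTheory GRing.Theory Num.Theory.
Import numFieldNormedType.Exports.
Local Open Scope classical_set_scope.
Local Open Scope ring_scope.

(* With eps_1 = 0, realizability provides for each pi in Pi a function f whose Bellman
   residual f - T^pi f vanishes in L^2(d^pi') for every pi' in Pi.  By Jensen the residual
   then has zero d^mu-mean against every bounded weight, so E_mu(pi, f) = 0, and the
   telescoping identity (a consequence of the flow equation of discounted occupancies)
     L_mu(pi, f) = J(pi) - J(mu) + E_{d^pi}[f - T^pi f] - E_{d^mu}[f - T^pi f]
   gives L_mu(pi, f) = J(pi) - J(mu).  Comparing pihat with mu in the argmax (L_mu(mu, .) = 0)
   and f_r, f_c with these witnesses in the argmins yields
     lambda {L_mu(pihat, f_c)}_+ <= L_mu(pihat, f_r) <= J_r(pihat) - J_r(mu) <= 1,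
     J_c(pihat) - J_c(mu) <= L_mu(pihat, f_c),
   from which both bounds follow. *)

Lemma sqr_sqrtr_le0 (F : rcfType) (x : F) : Num.sqrt x ^+ 2 <= 0 -> x <= 0.
Proof. by move=> h; rewrite -sqrtr_eq0 -sqrf_eq0 eq_le h sqr_ge0. Qed.

Section ProbabilityRintegral.
Context d (T : measurableType d) (R : realType).
Variable mu : {measure set T -> \bar R}.
Hypothesis mu_setT : mu setT = 1%E.

Lemma bounded_integrable_prob (h : T -> R) (M : R) :
  measurable_fun setT h -> (forall x, `|h x| <= M) ->
  mu.-integrable setT (EFin \o h).
Proof.
move=> mh hM; apply: measurable_bounded_integrable => //.
  by rewrite mu_setT ltry.
exists M; split; first exact: num_real.
by move=> N MN x _; exact: le_trans (hM x) (ltW MN).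
Qed.

Lemma Rintegral_cst_prob (c : R) : Rintegral mu setT (fun=> c) = c.
Proof. by rewrite Rintegral_cst // mu_setT mulr1. Qed.

Lemma normr_Rintegral_le (h : T -> R) (M : R) :
  measurable_fun setT h -> (forall x, `|h x| <= M) ->
  `|Rintegral mu setT h| <= M.
Proof.
move=> mh hM; have h_int := bounded_integrable_prob mh hM.
have cst_int (c : R) : mu.-integrable setT (EFin \o fun=> c).
  by apply: (@bounded_integrable_prob _ `|c|) => //; exact: measurable_cst.
have hM' x : - M <= h x <= M by rewrite -ler_norml.
rewrite ler_norml; apply/andP; split.
- rewrite -{1}(Rintegral_cst_prob (- M)).
  by apply: le_Rintegral => // x _; case/andP: (hM' x).
- rewrite -[leRHS](Rintegral_cst_prob M).
  by apply: le_Rintegral => // x _; case/andP: (hM' x).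
Qed.

Lemma Rintegral_lincomb (c1 c2 : R) (h1 h2 : T -> R) (M1 M2 : R) :
  measurable_fun setT h1 -> (forall x, `|h1 x| <= M1) ->
  measurable_fun setT h2 -> (forall x, `|h2 x| <= M2) ->
  Rintegral mu setT (fun x => c1 * h1 x + c2 * h2 x) =
  c1 * Rintegral mu setT h1 + c2 * Rintegral mu setT h2.
Proof.
move=> mh1 hM1 mh2 hM2.
have scaled_int (c : R) (h : T -> R) (M : R) :
    measurable_fun setT h -> (forall x, `|h x| <= M) ->
    mu.-integrable setT (EFin \o fun x => c * h x).
  move=> mh hM; apply: (@bounded_integrable_prob _ (`|c| * M)).
  - by apply: measurable_funM => //; exact: measurable_cst.
  - by move=> x; rewrite normrM ler_wpM2l.
rewrite (RintegralD measurableT (scaled_int c1 _ _ mh1 hM1)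
  (scaled_int c2 _ _ mh2 hM2)).
by rewrite !RintegralZl //; exact: bounded_integrable_prob.
Qed.

End ProbabilityRintegral.

(* [measurable_fun_integral_kernel] only covers nonnegative integrands, hence the
   shift by [M]. *)
Lemma measurable_Rintegral_pker d d' (X : measurableType d) (Y : measurableType d')
    (R : realType) (k : R.-pker X ~> Y) (h : Y -> R) (M : R) :
  measurable_fun setT h -> (forall y, `|h y| <= M) ->
  measurable_fun setT (fun x => Rintegral (k x) setT h).
Proof.
move=> mh hM; have k_setT x : k x setT = 1%E := prob_kernel x.
have hM_ge0 y : 0 <= h y + M.
  by rewrite -lerBlDr sub0r; have := hM y; rewrite ler_norml => /andP[].
have -> : (fun x => Rintegral (k x) setT h) =
    (fun x => Rintegral (k x) setT (fun y => h y + M) - M).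
  apply/funext => x; rewrite RintegralD //.
  - by rewrite Rintegral_cst // prob_kernel mulr1 addrK.
  - exact: (bounded_integrable_prob (k_setT x) mh hM).
  - by apply: (bounded_integrable_prob (k_setT x) (M := `|M|)) => //;
      exact: measurable_cst.
apply: measurable_funB; last exact: measurable_cst.
apply: (measurableT_comp (fine_measurable measurableT)).
apply: measurable_fun_integral_kernel.
- exact: measurable_kernel.
- by move=> y; rewrite lee_fin.
- by apply/measurable_EFinP; apply: measurable_funD => //; exact: measurable_cst.
Qed.

Local Notation nextE := Defs.nextE.

Section CMDP.
Context {d : measure_display} {S : measurableType d} {R : realType} {A : finType}.

Definition measurable_sa (g : S -> A -> R) :=
  forall a, measurable_fun setT (fun s => g s a).

Definition bounded_measurable (g : S -> A -> R) :=
  measurable_sa g /\ exists M, forall s a, `|g s a| <= M.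

Definition lincomb (c1 : R) (g1 : S -> A -> R) (c2 : R) (g2 : S -> A -> R) :
  S -> A -> R := fun s a => c1 * g1 s a + c2 * g2 s a.

Lemma bounded_measurable_itv (g : S -> A -> R) (lo hi : R) :
  (forall s a, lo <= g s a <= hi) -> measurable_sa g -> bounded_measurable g.
Proof.
move=> g_itv mg; split=> //; exists (`|lo| + `|hi|) => s a.
have := ler_norm hi; have := ler_norm (- lo); rewrite normrN.
have := normr_ge0 lo; have := normr_ge0 hi; case/andP: (g_itv s a).
by rewrite ler_norml => *; apply/andP; split; lra.
Qed.

Lemma bounded_measurable_lincomb c1 g1 c2 g2 :
  bounded_measurable g1 -> bounded_measurable g2 ->
  bounded_measurable (lincomb c1 g1 c2 g2).
Proof.
move=> [mg1 [M1 gM1]] [mg2 [M2 gM2]]; split.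
  by move=> a; apply: measurable_funD; apply: measurable_funM => //;
    exact: measurable_cst.
exists (`|c1| * M1 + `|c2| * M2) => s a.
rewrite (le_trans (ler_normD _ _)) // !normrM.
by apply: lerD; exact: ler_wpM2l.
Qed.

Lemma bounded_measurable_mul g1 g2 :
  bounded_measurable g1 -> bounded_measurable g2 ->
  bounded_measurable (fun s a => g1 s a * g2 s a).
Proof.
move=> [mg1 [M1 gM1]] [mg2 [M2 gM2]]; split; first by move=> a; exact: measurable_funM.
by exists (M1 * M2) => s a; rewrite normrM ler_pM.
Qed.

Lemma bounded_measurable_sqr g :
  bounded_measurable g -> bounded_measurable (fun s a => g s a ^+ 2).
Proof.
by move=> bg; under eq_fun do under eq_fun do rewrite expr2; exact: bounded_measurable_mul.
Qed.

Lemma bounded_measurable_cst (c : R) : bounded_measurable (fun _ _ => c).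
Proof. by split; [move=> a; exact: measurable_cst | exists `|c|]. Qed.

Variables (P : A -> R.-pker S ~> S) (gamma : R).
Hypothesis gamma_itv : 0 <= gamma < 1.

Let gamma_ge0 : 0 <= gamma. Proof. by case/andP: gamma_itv. Qed.
Let gamma_lt1 : gamma < 1. Proof. by case/andP: gamma_itv. Qed.

Let P_setT a s : P a s setT = 1%E := prob_kernel s.

Section Policy.
Variable pi : S -> A -> R.
Hypothesis pi_valid : policy_valid pi.

Lemma measurable_polavg g : measurable_sa g -> measurable_fun setT (polavg pi g).
Proof.
case: pi_valid => _ [_ mpi] mg; apply: measurable_sum => a.
by apply: measurable_funM; [exact: mpi | exact: mg].
Qed.

Lemma normr_polavg_le g M : (forall s a, `|g s a| <= M) ->
  forall s, `|polavg pi g s| <= M.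
Proof.
case: pi_valid => pi_ge0 [pi_sum1 _] gM s.
rewrite (le_trans (ler_norm_sum _ _ _)) // -[leRHS]mul1r -(pi_sum1 s) mulr_suml.
by apply: ler_sum => a _; rewrite normrM ger0_norm // ler_wpM2l.
Qed.

Lemma polavg_ge0 g : (forall s a, 0 <= g s a) -> forall s, 0 <= polavg pi g s.
Proof.
by case: pi_valid => pi_ge0 _ g_ge0 s; apply: sumr_ge0 => a _; exact: mulr_ge0.
Qed.

Lemma polavg_lincomb c1 g1 c2 g2 s :
  polavg pi (lincomb c1 g1 c2 g2) s = c1 * polavg pi g1 s + c2 * polavg pi g2 s.
Proof.
rewrite /polavg !mulr_sumr -big_split /=; apply: eq_bigr => a _.
by rewrite /lincomb; ring.
Qed.

Lemma polavg_state (h : S -> R) s : polavg pi (fun s _ => h s) s = h s.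
Proof. by case: pi_valid => _ [pi_sum1 _]; rewrite /polavg -mulr_suml pi_sum1 mul1r. Qed.

Lemma bounded_measurable_polavg g :
  bounded_measurable g -> bounded_measurable (fun s (_ : A) => polavg pi g s).
Proof.
move=> [mg [M gM]]; split; first by move=> a; exact: measurable_polavg.
by exists M => s _; exact: normr_polavg_le.
Qed.

Lemma normr_nextE_le g M : measurable_sa g -> (forall s a, `|g s a| <= M) ->
  forall s a, `|nextE P pi g s a| <= M.
Proof.
move=> mg gM s a.
exact: (normr_Rintegral_le (P_setT a s) (measurable_polavg mg) (normr_polavg_le gM)).
Qed.

Lemma bounded_measurable_nextE g :
  bounded_measurable g -> bounded_measurable (nextE P pi g).
Proof.
move=> [mg [M gM]]; split; last by exists M; exact: normr_nextE_le.
by move=> a; exact: (measurable_Rintegral_pker _ (measurable_polavg mg) (normr_polavg_le gM)).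
Qed.

Lemma nextE_lincomb c1 g1 c2 g2 :
  bounded_measurable g1 -> bounded_measurable g2 ->
  nextE P pi (lincomb c1 g1 c2 g2) =
  lincomb c1 (nextE P pi g1) c2 (nextE P pi g2).
Proof.
move=> [mg1 [M1 gM1]] [mg2 [M2 gM2]]; apply/funext => s; apply/funext => a.
rewrite /nextE (funext (polavg_lincomb _ _ _ _)).
exact: (Rintegral_lincomb (P_setT a s) _ _ (measurable_polavg mg1)
  (normr_polavg_le gM1) (measurable_polavg mg2) (normr_polavg_le gM2)).
Qed.

Lemma nextE_ge0 g : (forall s a, 0 <= g s a) -> forall s a, 0 <= nextE P pi g s a.
Proof. by move=> g_ge0 s a; apply: Rintegral_ge0 => x _; exact: polavg_ge0. Qed.

Lemma nextE_cst1 : nextE P pi (fun _ _ => 1) = (fun _ _ => 1).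
Proof.
apply/funext => s; apply/funext => a.
by rewrite /nextE (funext (polavg_state (fun=> 1))) (Rintegral_cst_prob (P_setT a s)).
Qed.

Lemma bounded_measurable_iter_nextE t g :
  bounded_measurable g -> bounded_measurable (iter t (nextE P pi) g).
Proof. by move=> bg; elim: t => [|t IH] //=; exact: bounded_measurable_nextE. Qed.

Lemma normr_iter_nextE_le t g M : bounded_measurable g ->
  (forall s a, `|g s a| <= M) -> forall s a, `|iter t (nextE P pi) g s a| <= M.
Proof.
move=> bg gM; elim: t => [|t IH] //=; apply: normr_nextE_le => //.
by case: (bounded_measurable_iter_nextE t bg).
Qed.

Lemma iter_nextE_lincomb t c1 g1 c2 g2 :
  bounded_measurable g1 -> bounded_measurable g2 ->
  iter t (nextE P pi) (lincomb c1 g1 c2 g2) =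
  lincomb c1 (iter t (nextE P pi) g1) c2 (iter t (nextE P pi) g2).
Proof.
move=> bg1 bg2; elim: t => [|t IH] //=.
by rewrite IH nextE_lincomb //; exact: bounded_measurable_iter_nextE.
Qed.

Lemma iter_nextE_ge0 t g : (forall s a, 0 <= g s a) ->
  forall s a, 0 <= iter t (nextE P pi) g s a.
Proof. by move=> g_ge0; elim: t => [|t IH] //=; exact: nextE_ge0. Qed.

Lemma nextE_polavg pi' f :
  nextE P pi (fun s _ => polavg pi' f s) = nextE P pi' f.
Proof.
apply/funext => s; apply/funext => a; rewrite /nextE.
by congr Rintegral; apply/funext => x; rewrite polavg_state.
Qed.

Definition discounted_seq g s a : R ^nat :=
  fun t => gamma ^+ t * iter t (nextE P pi) g s a.

Lemma QfunE g s a : Qfun P gamma pi g s a = limn (series (discounted_seq g s a)).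
Proof. by []. Qed.

Lemma normr_discounted_seq_le g (M : R) s a t : bounded_measurable g ->
  (forall s a, `|g s a| <= M) -> `|discounted_seq g s a t| <= geometric `|M| gamma t.
Proof.
move=> bg gM; rewrite normrM ger0_norm ?exprn_ge0 // mulrC.
rewrite ler_wpM2r ?exprn_ge0 //.
exact: le_trans (normr_iter_nextE_le t bg gM s a) (ler_norm _).
Qed.

Lemma is_cvg_discounted_series g s a : bounded_measurable g ->
  cvgn (series (discounted_seq g s a)).
Proof.
move=> bg; have [_ [M gM]] := bg; apply: normed_cvg.
apply: (@series_le_cvg _ _ (geometric `|M| gamma)) => [n|n|n|].
- exact: normr_ge0.
- exact: geometric_ge0.
- exact: normr_discounted_seq_le.
- by apply: is_cvg_geometric_series; rewrite ger0_norm.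
Qed.

Lemma Qfun_lincomb c1 g1 c2 g2 s a : bounded_measurable g1 -> bounded_measurable g2 ->
  Qfun P gamma pi (lincomb c1 g1 c2 g2) s a =
  c1 * Qfun P gamma pi g1 s a + c2 * Qfun P gamma pi g2 s a.
Proof.
move=> bg1 bg2; rewrite !QfunE.
have -> : series (discounted_seq (lincomb c1 g1 c2 g2) s a) =
    (fun n => c1 * series (discounted_seq g1 s a) n + c2 * series (discounted_seq g2 s a) n).
  apply/funext => n; rewrite /series /= !mulr_sumr -big_split /=.
  by apply: eq_bigr => t _; rewrite /discounted_seq iter_nextE_lincomb // /lincomb; ring.
by apply: cvg_lim => //; apply: cvgD; apply: cvgMl_tmp; exact: is_cvg_discounted_series.
Qed.

Lemma Qfun_bellman g s a : bounded_measurable g ->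
  Qfun P gamma pi g s a = g s a + gamma * Qfun P gamma pi (nextE P pi g) s a.
Proof.
move=> bg; rewrite !QfunE.
have tail n : series (discounted_seq g s a) n.+1 =
    g s a + gamma * series (discounted_seq (nextE P pi g) s a) n.
  rewrite /series /= big_nat_recl // /discounted_seq expr0 mul1r mulr_sumr.
  by congr (_ + _); apply: eq_bigr => t _; rewrite -iterSr exprS mulrA.
apply: cvg_lim => //; rewrite -(cvg_shiftS (series _)) (funext tail).
apply: cvgD; first exact: cvg_cst.
by apply: cvgMl_tmp; apply: is_cvg_discounted_series; exact: bounded_measurable_nextE.
Qed.

Lemma Qfun_ge0 g s a : bounded_measurable g -> (forall s a, 0 <= g s a) ->
  0 <= Qfun P gamma pi g s a.
Proof.
move=> bg g_ge0; rewrite QfunE; apply: limr_ge; first exact: is_cvg_discounted_series.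
apply: nearW => n; apply: sumr_ge0 => t _.
by apply: mulr_ge0; [exact: exprn_ge0 | exact: iter_nextE_ge0].
Qed.

Lemma normr_Qfun_le g (M : R) s a : bounded_measurable g -> (forall s a, `|g s a| <= M) ->
  `|Qfun P gamma pi g s a| <= `|M| / (1 - gamma).
Proof.
move=> bg gM.
have partial_le n :
    - (`|M| / (1 - gamma)) <= series (discounted_seq g s a) n <= `|M| / (1 - gamma).
  rewrite -ler_norml (le_trans (ler_norm_sum _ _ _)) //.
  apply: (@le_trans _ _ (series (geometric `|M| gamma) n)).
    by apply: ler_sum => t _; exact: normr_discounted_seq_le.
  rewrite geometric_seriesE ?lt_eqF //= ler_pM2r ?invr_gt0 ?subr_gt0 //.
  by rewrite ler_piMr // lerBlDr lerDl exprn_ge0.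
have cvg_partial := @is_cvg_discounted_series g s a bg.
rewrite QfunE ler_norml; apply/andP; split.
- by apply: limr_ge => //; apply: nearW => n; have /andP[] := partial_le n.
- by apply: limr_le => //; apply: nearW => n; have /andP[] := partial_le n.
Qed.

Lemma bounded_measurable_Qfun g :
  bounded_measurable g -> bounded_measurable (Qfun P gamma pi g).
Proof.
move=> bg; have [_ [M gM]] := bg; split; last first.
  by exists (`|M| / (1 - gamma)) => s a; exact: normr_Qfun_le.
move=> a; apply: (@measurable_fun_cvg _ _ _ _ (fun n s => series (discounted_seq g s a) n)).
  move=> n; apply: measurable_sum => t; apply: measurable_funM; first exact: measurable_cst.
  by case: (bounded_measurable_iter_nextE t bg).
by move=> s _; exact: is_cvg_discounted_series.
Qed.

Lemma Qfun_cst1 s a : Qfun P gamma pi (fun _ _ => 1) s a = (1 - gamma)^-1.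
Proof.
have := Qfun_bellman s a (bounded_measurable_cst 1); rewrite nextE_cst1 => Q1.
have gamma_neq1 : 1 - gamma != 0 by rewrite subr_eq0 eq_sym lt_eqF.
by apply: (mulIf gamma_neq1); rewrite mulVf // mulrBr mulr1 {1}Q1; ring.
Qed.

End Policy.

Definition bellman_residual (Rw : S -> A -> R) pi f : S -> A -> R :=
  fun s a => f s a - bellman P gamma Rw pi f s a.

Lemma bellman_residualE Rw pi f : bellman_residual Rw pi f =
  lincomb 1 f (-1) (lincomb 1 Rw gamma (nextE P pi f)).
Proof.
by apply/funext => s; apply/funext => a; rewrite /lincomb /bellman_residual /bellman; ring.
Qed.

Lemma bounded_measurable_residual Rw pi f : policy_valid pi ->
  bounded_measurable Rw -> bounded_measurable f ->
  bounded_measurable (bellman_residual Rw pi f).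
Proof.
move=> pi_valid bR bf; rewrite bellman_residualE.
by do 2 apply: bounded_measurable_lincomb => //; exact: bounded_measurable_nextE.
Qed.

Section Occupancy.
Variable rho : probability S R.

Let rho_setT : rho setT = 1%E := probability_setT rho.

Section Policy.
Variable pi : S -> A -> R.
Hypothesis pi_valid : policy_valid pi.

Lemma occE_lincomb c1 g1 c2 g2 : bounded_measurable g1 -> bounded_measurable g2 ->
  occE P rho gamma pi (lincomb c1 g1 c2 g2) =
  c1 * occE P rho gamma pi g1 + c2 * occE P rho gamma pi g2.
Proof.
move=> bg1 bg2; rewrite /occE /Vfun.
have [mQ1 [M1 QM1]] := bounded_measurable_Qfun pi_valid bg1.
have [mQ2 [M2 QM2]] := bounded_measurable_Qfun pi_valid bg2.
have -> : polavg pi (Qfun P gamma pi (lincomb c1 g1 c2 g2)) =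
    (fun s => c1 * polavg pi (Qfun P gamma pi g1) s + c2 * polavg pi (Qfun P gamma pi g2) s).
  apply/funext => s; rewrite -polavg_lincomb; congr polavg.
  by apply/funext => s'; apply/funext => a; exact: Qfun_lincomb.
rewrite (Rintegral_lincomb rho_setT _ _
  (measurable_polavg pi_valid mQ1) (normr_polavg_le pi_valid QM1)
  (measurable_polavg pi_valid mQ2) (normr_polavg_le pi_valid QM2)).
by ring.
Qed.

Lemma occE_bellman g : bounded_measurable g ->
  occE P rho gamma pi g = (1 - gamma) * Rintegral rho setT (polavg pi g)
    + gamma * occE P rho gamma pi (nextE P pi g).
Proof.
move=> bg; have bPg := bounded_measurable_nextE pi_valid bg.
have [mg [M gM]] := bg; have [mQ [MQ QM]] := bounded_measurable_Qfun pi_valid bPg.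
rewrite /occE /Vfun.
have -> : polavg pi (Qfun P gamma pi g) = (fun s =>
    1 * polavg pi g s + gamma * polavg pi (Qfun P gamma pi (nextE P pi g)) s).
  apply/funext => s; rewrite -polavg_lincomb; congr polavg.
  by apply/funext => s'; apply/funext => a; rewrite Qfun_bellman // /lincomb mul1r.
rewrite (Rintegral_lincomb rho_setT _ _
  (measurable_polavg pi_valid mg) (normr_polavg_le pi_valid gM)
  (measurable_polavg pi_valid mQ) (normr_polavg_le pi_valid QM)).
by ring.
Qed.

Lemma occE_ge0 g : bounded_measurable g -> (forall s a, 0 <= g s a) ->
  0 <= occE P rho gamma pi g.
Proof.
move=> bg g_ge0; apply: mulr_ge0; first by rewrite subr_ge0 ltW.
apply: Rintegral_ge0 => s _; apply: polavg_ge0 => // s' a; exact: Qfun_ge0.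
Qed.

Lemma occE_cst1 : occE P rho gamma pi (fun _ _ => 1) = 1.
Proof.
rewrite /occE /Vfun (_ : Qfun _ _ _ _ = fun _ _ => (1 - gamma)^-1); last first.
  by apply/funext => s; apply/funext => a; exact: Qfun_cst1.
rewrite (funext (polavg_state pi_valid _)) (Rintegral_cst_prob rho_setT).
by rewrite mulfV // subr_eq0 eq_sym lt_eqF.
Qed.

Lemma occE_scale c g : bounded_measurable g ->
  occE P rho gamma pi (fun s a => c * g s a) = c * occE P rho gamma pi g.
Proof.
move=> bg; have -> : (fun s a => c * g s a) = lincomb c g 0 g.
  by apply/funext => s; apply/funext => a; rewrite /lincomb mul0r addr0.
by rewrite occE_lincomb // mul0r addr0.
Qed.

Lemma occE_cst c : occE P rho gamma pi (fun _ _ => c) = c.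
Proof.
have -> : (fun _ _ => c) = (fun s a => c * (fun _ _ => 1) s a) by rewrite mulr1.
by rewrite occE_scale ?occE_cst1 ?mulr1 //; exact: bounded_measurable_cst.
Qed.

Lemma le_occE g1 g2 : bounded_measurable g1 -> bounded_measurable g2 ->
  (forall s a, g1 s a <= g2 s a) -> occE P rho gamma pi g1 <= occE P rho gamma pi g2.
Proof.
move=> bg1 bg2 g12; rewrite -subr_ge0 -[X in X - _]mul1r -mulN1r -occE_lincomb //.
apply: occE_ge0 => [|s a]; first exact: bounded_measurable_lincomb.
by have := g12 s a; rewrite /lincomb; lra.
Qed.

Lemma occE_itv g (lo hi : R) : bounded_measurable g -> (forall s a, lo <= g s a <= hi) ->
  lo <= occE P rho gamma pi g <= hi.
Proof.
move=> bg g_itv; rewrite -{1}(occE_cst lo) -(occE_cst hi).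
by apply/andP; split; apply: le_occE => //;
  do ?exact: bounded_measurable_cst; by move=> s a; case/andP: (g_itv s a).
Qed.

(* Jensen, via [0 <= E[(e - E e)^2]]. *)
Lemma sqr_occE_le e : bounded_measurable e ->
  occE P rho gamma pi e ^+ 2 <= occE P rho gamma pi (fun s a => e s a ^+ 2).
Proof.
move=> be; set E := occE P rho gamma pi e.
have be2 := bounded_measurable_sqr be.
have bcentered := bounded_measurable_lincomb (-2 * E) (E ^+ 2) be (bounded_measurable_cst 1).
have : 0 <= occE P rho gamma pi (lincomb 1 (fun s a => e s a ^+ 2) 1
                                   (lincomb (-2 * E) e (E ^+ 2) (fun _ _ => 1))).
  apply: occE_ge0 => [|s a]; first exact: bounded_measurable_lincomb.
  by rewrite /lincomb (_ : _ + _ = (e s a - E) ^+ 2) ?sqr_ge0 //; ring.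
rewrite occE_lincomb // occE_lincomb ?occE_cst1 -/E //; last exact: bounded_measurable_cst.
nra.
Qed.

Lemma occE_eq0_of_sqr_le0 e : bounded_measurable e ->
  occE P rho gamma pi (fun s a => e s a ^+ 2) <= 0 -> occE P rho gamma pi e = 0.
Proof.
move=> be /(le_trans (sqr_occE_le be)) sqr_le0; apply/eqP; rewrite -sqrf_eq0 eq_le sqr_le0.
exact: sqr_ge0.
Qed.

Lemma occE_state pi' f : policy_valid pi' -> bounded_measurable f ->
  occE P rho gamma pi (fun s _ => polavg pi' f s) =
  (1 - gamma) * Rintegral rho setT (polavg pi' f)
    + gamma * occE P rho gamma pi (nextE P pi' f).
Proof.
move=> pi'_valid bf; rewrite occE_bellman; last exact: bounded_measurable_polavg.
suff -> : polavg pi (fun s _ => polavg pi' f s) = polavg pi' f by rewrite nextE_polavg.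
by apply/funext => s; exact: polavg_state.
Qed.

Lemma occE_polavg f : bounded_measurable f ->
  occE P rho gamma pi (fun s _ => polavg pi f s) = occE P rho gamma pi f.
Proof. by move=> bf; rewrite occE_state // [RHS]occE_bellman. Qed.

End Policy.

Lemma Lmu_occE mu pi f : policy_valid mu -> policy_valid pi -> bounded_measurable f ->
  Lmu P rho gamma mu pi f =
  occE P rho gamma mu (fun s _ => polavg pi f s) - occE P rho gamma mu f.
Proof.
move=> mu_valid pi_valid bf; rewrite /Lmu.
have -> : (fun s a => polavg pi f s - f s a) = lincomb 1 (fun s _ => polavg pi f s) (-1) f.
  by apply/funext => s; apply/funext => a; rewrite /lincomb; ring.
by rewrite occE_lincomb //; [ring | exact: bounded_measurable_polavg].
Qed.

Lemma Lmu_self pi f : policy_valid pi -> bounded_measurable f -> Lmu P rho gamma pi pi f = 0.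
Proof. by move=> pi_valid bf; rewrite Lmu_occE // occE_polavg // subrr. Qed.

Lemma Lmu_decomposition Rw mu pi f : policy_valid mu -> policy_valid pi ->
  bounded_measurable Rw -> bounded_measurable f ->
  Lmu P rho gamma mu pi f = (1 - gamma) * Rintegral rho setT (polavg pi f)
    - occE P rho gamma mu Rw - occE P rho gamma mu (bellman_residual Rw pi f).
Proof.
move=> mu_valid pi_valid bR bf; have bPf := bounded_measurable_nextE pi_valid bf.
rewrite Lmu_occE // occE_state // bellman_residualE.
rewrite occE_lincomb //; last exact: bounded_measurable_lincomb.
by rewrite occE_lincomb //; ring.
Qed.

Lemma Lmu_performance_difference Rw mu pi f : policy_valid mu -> policy_valid pi ->
  bounded_measurable Rw -> bounded_measurable f ->
  Lmu P rho gamma mu pi f = occE P rho gamma pi Rw - occE P rho gamma mu Rw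
    + occE P rho gamma pi (bellman_residual Rw pi f)
    - occE P rho gamma mu (bellman_residual Rw pi f).
Proof.
move=> mu_valid pi_valid bR bf; have := Lmu_decomposition pi_valid pi_valid bR bf.
rewrite (Lmu_self pi_valid bf) (Lmu_decomposition mu_valid pi_valid bR bf).
(* Abstract the integrals, which [lra] would otherwise try to unfold. *)
move: ((1 - gamma) * _) (occE P rho gamma pi Rw) (occE P rho gamma mu Rw).
move: (occE P rho gamma pi (bellman_residual Rw pi f)).
move: (occE P rho gamma mu (bellman_residual Rw pi f)).
move=> res_mu res_pi Jmu Jpi V; lra.
Qed.

(* [sup] of a set without supremum is [0], so no assumption on [W] is needed. *)
Lemma Emu_ge0 Rw W mu pi f : 0 <= Emu P rho gamma Rw W mu pi f.
Proof.
rewrite /Emu; set E := [set _ | _ in _].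
have [supE | /sup_out -> //] := pselect (has_sup E).
have [x Ex] := supE.1; apply: le_trans (sup_upper_bound supE Ex).
by case: Ex => w _ <-; exact: normr_ge0.
Qed.

Lemma Emu_eq0 Rw (W : set (S -> A -> R)) w0 mu pi f : policy_valid mu -> policy_valid pi ->
  bounded_measurable Rw -> bounded_measurable f ->
  (forall w, W w -> bounded_measurable w) -> W w0 ->
  occE P rho gamma mu (fun s a => bellman_residual Rw pi f s a ^+ 2) <= 0 ->
  Emu P rho gamma Rw W mu pi f = 0.
Proof.
move=> mu_valid pi_valid bR bf bW Ww0 res2_le0.
have bres := bounded_measurable_residual pi_valid bR bf.
have bres2 := bounded_measurable_sqr bres.
have weighted_eq0 w : W w ->
    occE P rho gamma mu (fun s a => w s a * bellman_residual Rw pi f s a) = 0.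
  move=> /bW bw; have [_ [M wM]] := bw; have bwres := bounded_measurable_mul bw bres.
  apply: (occE_eq0_of_sqr_le0 mu_valid bwres).
  apply: (@le_trans _ _ (occE P rho gamma mu
    (fun s a => M ^+ 2 * bellman_residual Rw pi f s a ^+ 2))).
    apply: (le_occE mu_valid) => [||s a]; first exact: bounded_measurable_sqr.
    - by apply: bounded_measurable_mul => //; exact: bounded_measurable_cst.
    - rewrite exprMn ler_wpM2r ?sqr_ge0 //.
      by have := wM s a; rewrite ler_norml => /andP[? ?]; nra.
  by rewrite occE_scale // mulr_ge0_le0 ?sqr_ge0.
rewrite /Emu (_ : [set _ | _ in _] = [set 0]) ?sup1 //.
apply/seteqP; split=> x /=; first by case=> w /weighted_eq0 -> <-; rewrite normr0.
by move=> ->; exists w0 => //; rewrite weighted_eq0 ?normr0.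
Qed.

Lemma realizable_Lmu_Emu Rw (W : set (S -> A -> R)) w0 mu pi f :
  policy_valid mu -> policy_valid pi -> bounded_measurable Rw -> bounded_measurable f ->
  (forall w, W w -> bounded_measurable w) -> W w0 ->
  norm2occ P rho gamma mu (bellman_residual Rw pi f) ^+ 2 <= 0 ->
  norm2occ P rho gamma pi (bellman_residual Rw pi f) ^+ 2 <= 0 ->
  Lmu P rho gamma mu pi f = Jval P rho gamma Rw pi - Jval P rho gamma Rw mu /\
  Emu P rho gamma Rw W mu pi f = 0.
Proof.
move=> mu_valid pi_valid bR bf bW Ww0 /sqr_sqrtr_le0 res_mu /sqr_sqrtr_le0 res_pi.
have bres := bounded_measurable_residual pi_valid bR bf.
split; last exact: Emu_eq0 Ww0 res_mu.
rewrite (Lmu_performance_difference mu_valid pi_valid bR bf).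
by rewrite (occE_eq0_of_sqr_le0 mu_valid bres res_mu)
  (occE_eq0_of_sqr_le0 pi_valid bres res_pi) subr0 addr0.
Qed.

End Occupancy.
End CMDP.

Lemma constrained_improvement (F : realFieldType)
    (lambda beta Jr_pi Jr_mu Jc_pi Jc_mu Lr Lc Er Ec : F) :
  0 < lambda -> 0 <= beta -> 0 <= Er -> 0 <= Ec -> 0 <= Jr_mu -> Jr_pi <= 1 ->
  lambda * Num.max Lc 0 <= Lr ->
  Lr + beta * Er <= Jr_pi - Jr_mu ->
  - lambda * Lc + beta * Ec <= - lambda * (Jc_pi - Jc_mu) ->
  Jr_mu <= Jr_pi /\ Num.max Jc_pi 0 <= Num.max Jc_mu 0 + lambda^-1.
Proof.
move=> lambda_gt0 beta_ge0 Er_ge0 Ec_ge0 Jr_mu_ge0 Jr_pi_le1 argmax fr_min fc_min.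
have bEr := mulr_ge0 beta_ge0 Er_ge0; have bEc := mulr_ge0 beta_ge0 Ec_ge0.
have Lc_le_max : lambda * Lc <= lambda * Num.max Lc 0 by rewrite ler_pM2l // le_max lexx.
have max_ge0 : 0 <= lambda * Num.max Lc 0 by rewrite pmulr_rge0 // le_max lexx orbT.
split; first lra.
have : lambda * (Jc_pi - Jc_mu) <= lambda * lambda^-1 by rewrite mulfV ?gt_eqF //; nra.
rewrite ler_pM2l // => Jc_diff_le.
have Jc_mu_le : Jc_mu <= Num.max Jc_mu 0 by rewrite le_max lexx.
have max_mu_ge0 : 0 <= Num.max Jc_mu 0 by rewrite le_max lexx orbT.
have inv_ge0 : 0 <= lambda^-1 by rewrite invr_ge0 ltW.
by rewrite ge_max; apply/andP; split; lra.
Qed.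

Theorem theorem1
  (d : measure_display) (S : measurableType d) (R : realType) (A : finType)
  (P : A -> R.-pker S ~> S) (rho : probability S R) (gamma : R)
  (Rw Cw : S -> A -> R)
  (Pi F G W : set (S -> A -> R)) (Bw : R)
  (mub : S -> A -> R) (beta lambda : R)
  (fr fc : (S -> A -> R) -> (S -> A -> R)) (pihat : S -> A -> R)
  (* discount factor *)
  (Hgamma : 0 <= gamma < 1)
  (* reward in [0,1], cost in [-1,1], both measurable *)
  (HRw : forall s a, 0 <= Rw s a <= 1)
  (HCw : forall s a, -1 <= Cw s a <= 1)
  (HRm : forall a, measurable_fun setT (fun s => Rw s a))
  (HCm : forall a, measurable_fun setT (fun s => Cw s a))
  (* the classes *)
  (HPi : forall pi, Pi pi -> policy_valid pi)
  (HF : forall f, F f -> (forall s a, 0 <= f s a <= (1 - gamma)^-1) /\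
                         forall a, measurable_fun setT (fun s => f s a))
  (HG : forall g, G g -> (forall s a, - (1 - gamma)^-1 <= g s a <= (1 - gamma)^-1) /\
                         forall a, measurable_fun setT (fun s => g s a))
  (HW : forall w, W w -> (forall s a, 0 <= w s a <= Bw) /\
                         forall a, measurable_fun setT (fun s => w s a))
  (HW1 : W (fun _ _ => 1))
  (* approximate realizability with eps_1 = 0 *)
  (Hreal_r : forall pi, Pi pi -> exists f, F f /\ forall pi', Pi pi' ->
      norm2occ P rho gamma pi' (fun s a => f s a - bellman P gamma Rw pi f s a) ^+ 2 <= 0)
  (Hreal_c : forall pi, Pi pi -> exists g, G g /\ forall pi', Pi pi' ->
      norm2occ P rho gamma pi' (fun s a => g s a - bellman P gamma Cw pi g s a) ^+ 2 <= 0)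
  (* behavior policy in the class *)
  (Hmu : Pi mub)
  (Hbeta : 0 <= beta) (Hlambda : 0 < lambda)
  (* f_r^pi in argmin_{f in F} L_mu(pi,f) + beta E_mu(pi,f) *)
  (Hfr : forall pi, Pi pi -> F (fr pi) /\ forall f, F f ->
      Lmu P rho gamma mub pi (fr pi) + beta * Emu P rho gamma Rw W mub pi (fr pi)
      <= Lmu P rho gamma mub pi f + beta * Emu P rho gamma Rw W mub pi f)
  (* f_c^pi in argmin_{g in G} - lambda L_mu(pi,g) + beta hatE_mu(pi,g) *)
  (Hfc : forall pi, Pi pi -> G (fc pi) /\ forall g, G g ->
      - lambda * Lmu P rho gamma mub pi (fc pi) + beta * Emu P rho gamma Cw W mub pi (fc pi)
      <= - lambda * Lmu P rho gamma mub pi g + beta * Emu P rho gamma Cw W mub pi g)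
  (* pihat in argmax_{pi in Pi} L_mu(pi, f_r^pi) - lambda {L_mu(pi, f_c^pi)}_+ *)
  (Hpihat : Pi pihat /\ forall pi, Pi pi ->
      Lmu P rho gamma mub pi (fr pi) - lambda * Num.max (Lmu P rho gamma mub pi (fc pi)) 0
      <= Lmu P rho gamma mub pihat (fr pihat)
         - lambda * Num.max (Lmu P rho gamma mub pihat (fc pihat)) 0) :
  Jval P rho gamma Rw mub <= Jval P rho gamma Rw pihat /\
  Num.max (Jval P rho gamma Cw pihat) 0
    <= Num.max (Jval P rho gamma Cw mub) 0 + lambda^-1.
Proof.
have [pihat_in pihat_max] := Hpihat.
have mu_valid := HPi _ Hmu; have pihat_valid := HPi _ pihat_in.
have bF f : F f -> bounded_measurable f by case/HF; exact: bounded_measurable_itv.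
have bG g : G g -> bounded_measurable g by case/HG; exact: bounded_measurable_itv.
have bW w : W w -> bounded_measurable w by case/HW; exact: bounded_measurable_itv.
have bR := bounded_measurable_itv HRw HRm; have bC := bounded_measurable_itv HCw HCm.
have [fs [Ffs fs_real]] := Hreal_r _ pihat_in; have [gs [Ggs gs_real]] := Hreal_c _ pihat_in.
have [Lfs Efs] := realizable_Lmu_Emu Hgamma mu_valid pihat_valid bR (bF _ Ffs) bW HW1
  (fs_real _ Hmu) (fs_real _ pihat_in).
have [Lgs Egs] := realizable_Lmu_Emu Hgamma mu_valid pihat_valid bC (bG _ Ggs) bW HW1
  (gs_real _ Hmu) (gs_real _ pihat_in).
have argmax := pihat_max _ Hmu.
rewrite (Lmu_self P Hgamma rho mu_valid (bF _ (Hfr _ Hmu).1)) in argmax.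
rewrite (Lmu_self P Hgamma rho mu_valid (bG _ (Hfc _ Hmu).1)) in argmax.
rewrite maxxx mulr0 subr0 subr_ge0 in argmax.
have fr_min := (Hfr _ pihat_in).2 _ Ffs; have fc_min := (Hfc _ pihat_in).2 _ Ggs.
rewrite Lfs Efs mulr0 addr0 in fr_min; rewrite Lgs Egs mulr0 addr0 in fc_min.
have [Jr_mu_ge0 _] := andP (occE_itv P Hgamma rho mu_valid bR HRw).
have [_ Jr_pi_le1] := andP (occE_itv P Hgamma rho pihat_valid bR HRw).
exact: (constrained_improvement Hlambda Hbeta (Emu_ge0 _ _ _ _ _ _ _ _)
  (Emu_ge0 _ _ _ _ _ _ _ _) Jr_mu_ge0 Jr_pi_le1 argmax fr_min fc_min).
Qed.
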